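(* Let $S\in\mathbb{R}^{nd\times p}$ be such that every $d\times d$ diagonal block of $SS^{\top}$ equals $I_d$. Then for every matrix $X\in\mathbb{R}^{nd\times nd}$, \[ \|X\circ SS^{\top}\|_{\mathrm{op}}\le\|X\|_{\mathrm{op}}, \] where $\circ$ denotes the Hadamard (entrywise) product. *)

From HB Require Import structures.
From mathcomp Require Import all_boot all_order all_algebra.
From mathcomp Require Import boolp classical_sets reals.
Set Implicit Arguments. Unset Strict Implicit. Unset Printing Implicit Defensive.
Import Order.TTheory GRing.Theory Num.Theory.
Local Open Scope ring_scope.
Local Open Scope classical_set_scope.

Definition l2norm (R : realType) (n : nat) (v : 'cV[R]_n) : R :=
  Num.sqrt (\sum_(i < n) v i 0 ^+ 2).

Definition opnorm (R : realType) (m n : nat) (A : 'M[R]_(m, n)) : R :=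
  sup [set l2norm (A *m v) | v in [set v : 'cV[R]_n | l2norm v <= 1]].

Definition hadamard (R : realType) (m n : nat) (A B : 'M[R]_(m, n)) : 'M[R]_(m, n) :=
  \matrix_(i, j) (A i j * B i j).

(* Let u = (X o S S^T) v and let S_k be the k-th column of S. Entrywise
   u = sum_k S_k o X (v o S_k), hence |u|^2 = sum_k <u o S_k, X (v o S_k)>
   <= |X| sum_k |u o S_k| |v o S_k| <= |X| |u| |v| by Cauchy-Schwarz twice,
   since sum_k |w o S_k|^2 = |w|^2 as soon as the rows of S are unit vectors.
   So only the diagonal of S S^T matters. *)

From HB Require Import structures.
From mathcomp Require Import all_boot all_order all_algebra.
From mathcomp Require Import boolp classical_sets reals.
From mathcomp Require Import ring lra.
Import Order.TTheory GRing.Theory Num.Theory.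
Local Open Scope ring_scope.
Local Open Scope classical_set_scope.

Set Implicit Arguments.
Unset Strict Implicit.
Unset Printing Implicit Defensive.

Lemma lagrange_identity (R : comRingType) (I : finType) (a b : I -> R) :
  \sum_i \sum_j (a i * b j - a j * b i) ^+ 2 =
  2 * ((\sum_i a i ^+ 2) * (\sum_i b i ^+ 2) - (\sum_i a i * b i) ^+ 2).
Proof.
have -> : forall x y z : R, 2 * (x * y - z ^+ 2) = x * y + y * x - 2 * (z * z).
  by move=> x y z; ring.
rewrite !big_distrlr /= mulr_sumr -!big_split -sumrB /=.
apply: eq_bigr => i _; rewrite mulr_sumr -!big_split -sumrB /=.
by apply: eq_bigr => j _; ring.
Qed.

Lemma sqr_sum_mul_le (R : realDomainType) (I : finType) (a b : I -> R) :
  (\sum_i a i * b i) ^+ 2 <= (\sum_i a i ^+ 2) * (\sum_i b i ^+ 2).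
Proof.
rewrite -subr_ge0 -(@pmulr_rge0 _ 2) // -lagrange_identity.
by do 2!(apply: sumr_ge0 => ? _); exact: sqr_ge0.
Qed.

Lemma abs_sum_mul_le (R : rcfType) (I : finType) (a b : I -> R) :
  `|\sum_i a i * b i| <= Num.sqrt (\sum_i a i ^+ 2) * Num.sqrt (\sum_i b i ^+ 2).
Proof.
rewrite -sqrtrM ?sumr_ge0 // => [|i _]; last exact: sqr_ge0.
by rewrite -sqrtr_sqr ler_wsqrtr // sqr_sum_mul_le.
Qed.

Section L2Norm.
Variable R : realType.

Lemma l2norm_ge0 n (v : 'cV[R]_n) : 0 <= l2norm v.
Proof. exact: sqrtr_ge0. Qed.

Lemma sqr_l2norm n (v : 'cV[R]_n) : l2norm v ^+ 2 = \sum_i v i 0 ^+ 2.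
Proof. by rewrite sqr_sqrtr // sumr_ge0 // => i _; exact: sqr_ge0. Qed.

Lemma l2norm0 n : l2norm (0 : 'cV[R]_n) = 0.
Proof. by rewrite /l2norm big1 ?sqrtr0 // => i _; rewrite mxE expr0n. Qed.

Lemma l2normZ n (c : R) (v : 'cV[R]_n) : l2norm (c *: v) = `|c| * l2norm v.
Proof.
rewrite /l2norm -sqrtr_sqr -sqrtrM ?sqr_ge0 // mulr_sumr.
by congr Num.sqrt; apply: eq_bigr => i _; rewrite mxE exprMn.
Qed.

Lemma l2norm0_eq0 n (v : 'cV[R]_n) : l2norm v = 0 -> v = 0.
Proof.
move=> /eqP; rewrite sqrtr_eq0 => le0.
have sum0 : \sum_i v i 0 ^+ 2 = 0.
  by apply/eqP; rewrite eq_le le0 sumr_ge0 // => i _; exact: sqr_ge0.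
apply/matrixP => i j; rewrite ord1 mxE; apply/eqP; rewrite -sqrf_eq0; apply/eqP.
exact: (psumr_eq0P (fun i _ => sqr_ge0 (v i 0)) sum0).
Qed.

Lemma dot_le_l2norm n (u v : 'cV[R]_n) : \sum_i u i 0 * v i 0 <= l2norm u * l2norm v.
Proof. exact: le_trans (ler_norm _) (abs_sum_mul_le _ _). Qed.

Lemma l2norm_mulmx_le_frobenius m n (A : 'M[R]_(m, n)) (v : 'cV[R]_n) :
  l2norm (A *m v) <= Num.sqrt (\sum_i \sum_j A i j ^+ 2) * l2norm v.
Proof.
rewrite -sqrtrM ?sumr_ge0 // => [|i _]; last by rewrite sumr_ge0 // => j _; exact: sqr_ge0.
rewrite ler_wsqrtr // mulr_suml; apply: ler_sum => i _.
by rewrite mxE sqr_sum_mul_le.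
Qed.

End L2Norm.

Section OperatorNorm.
Variables (R : realType) (m n : nat) (A : 'M[R]_(m, n)).

Let image_unit_ball := [set l2norm (A *m v) | v in [set v : 'cV[R]_n | l2norm v <= 1]].

Lemma image_unit_ball_neq0 : image_unit_ball !=set0.
Proof. by exists (l2norm (A *m 0)), 0 => //=; rewrite l2norm0. Qed.

Lemma opnorm_ub (v : 'cV[R]_n) : l2norm v <= 1 -> l2norm (A *m v) <= opnorm A.
Proof.
move=> v1; apply: sup_upper_bound; last by exists v.
split; first exact: image_unit_ball_neq0.
exists (Num.sqrt (\sum_i \sum_j A i j ^+ 2)) => _ [w /= w1 <-].
apply: le_trans (l2norm_mulmx_le_frobenius A w) _.
by rewrite ler_piMr ?sqrtr_ge0.
Qed.

Lemma opnorm_ge0 : 0 <= opnorm A.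
Proof.
by apply: le_trans (opnorm_ub (v := 0) _); rewrite ?mulmx0 l2norm0.
Qed.

Lemma l2norm_mulmx_le (v : 'cV[R]_n) : l2norm (A *m v) <= opnorm A * l2norm v.
Proof.
have [->|v_neq0] := eqVneq v 0; first by rewrite mulmx0 !l2norm0 mulr0.
have v_gt0 : 0 < l2norm v.
  by rewrite lt_def l2norm_ge0 andbT; apply: contra_neq v_neq0; exact: l2norm0_eq0.
have := opnorm_ub (v := (l2norm v)^-1 *: v).
rewrite -scalemxAr !l2normZ ger0_norm ?invr_ge0 ?l2norm_ge0 // mulVf ?gt_eqF //.
by rewrite ler_pdivrMl // mulrC => /(_ (lexx _)).
Qed.

Lemma opnorm_le (c : R) :
  0 <= c -> (forall v : 'cV[R]_n, l2norm (A *m v) <= c * l2norm v) -> opnorm A <= c.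
Proof.
move=> c_ge0 Ac; apply: ge_sup; first exact: image_unit_ball_neq0.
move=> _ [v /= v1 <-]; apply: le_trans (Ac v) _.
by rewrite ler_piMr.
Qed.

End OperatorNorm.

Section HadamardGram.
Variables (R : realType) (m p : nat).

Lemma hadamard_gram_mulmx m' (X : 'M[R]_(m, m')) (S : 'M[R]_(m, p)) (T : 'M[R]_(m', p))
    (v : 'cV[R]_m') :
  hadamard X (S *m T^T) *m v = \sum_k hadamard (col k S) (X *m hadamard v (col k T)).
Proof.
apply/matrixP => i j; rewrite summxE !mxE.
under [RHS]eq_bigr do rewrite !mxE big_distrr /=.
rewrite exchange_big /=; apply: eq_bigr => l _.
rewrite !mxE big_distrr big_distrl /=.
by apply: eq_bigr => k _; rewrite !mxE; ring.
Qed.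

Variable S : 'M[R]_(m, p).
Hypothesis S_unit_rows : forall i, (S *m S^T) i i = 1.

Lemma sum_sqr_l2norm_hadamard_col (w : 'cV[R]_m) :
  \sum_k l2norm (hadamard w (col k S)) ^+ 2 = l2norm w ^+ 2.
Proof.
under eq_bigr do rewrite sqr_l2norm.
rewrite sqr_l2norm exchange_big /=; apply: eq_bigr => i _.
rewrite -[RHS]mulr1 -(S_unit_rows i) mxE mulr_sumr.
by apply: eq_bigr => k _; rewrite !mxE; ring.
Qed.

Lemma sqrt_sum_sqr_l2norm_hadamard_col (w : 'cV[R]_m) :
  Num.sqrt (\sum_k l2norm (hadamard w (col k S)) ^+ 2) = l2norm w.
Proof. by rewrite sum_sqr_l2norm_hadamard_col sqrtr_sqr ger0_norm ?l2norm_ge0. Qed.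

Lemma l2norm_hadamard_gram_mulmx_le (X : 'M[R]_m) (v : 'cV[R]_m) :
  l2norm (hadamard X (S *m S^T) *m v) <= opnorm X * l2norm v.
Proof.
set u := hadamard X (S *m S^T) *m v.
pose uS k := hadamard u (col k S); pose vS k := hadamard v (col k S).
have u_sqr : l2norm u ^+ 2 = \sum_k \sum_i uS k i 0 * (X *m vS k) i 0.
  rewrite sqr_l2norm exchange_big /=; apply: eq_bigr => i _.
  rewrite expr2 {2}/u hadamard_gram_mulmx summxE mulr_sumr.
  by apply: eq_bigr => k _; rewrite !mxE mulrA.
have u_sqr_le : l2norm u ^+ 2 <= opnorm X * (l2norm u * l2norm v).
  rewrite u_sqr -(sqrt_sum_sqr_l2norm_hadamard_col u) -(sqrt_sum_sqr_l2norm_hadamard_col v).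
  apply: le_trans (_ : \sum_k opnorm X * (l2norm (uS k) * l2norm (vS k)) <= _).
    apply: ler_sum => k _; apply: le_trans (dot_le_l2norm _ _) _.
    by rewrite mulrCA ler_wpM2l ?l2norm_ge0 ?l2norm_mulmx_le.
  rewrite -mulr_sumr ler_wpM2l ?opnorm_ge0 //.
  exact: le_trans (ler_norm _) (abs_sum_mul_le _ _).
move: u_sqr_le; rewrite mulrCA.
have := l2norm_ge0 u; have := mulr_ge0 (opnorm_ge0 X) (l2norm_ge0 v).
nra.
Qed.

Lemma opnorm_hadamard_gram_le (X : 'M[R]_m) : opnorm (hadamard X (S *m S^T)) <= opnorm X.
Proof. exact: opnorm_le (opnorm_ge0 X) (l2norm_hadamard_gram_mulmx_le X). Qed.

End HadamardGram.

Theorem lemma8 (R : realType) (n d p : nat) (S : 'M[R]_(n * d, p))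
  (hS : forall i j : 'I_(n * d), (i %/ d = j %/ d)%N ->
          (S *m S^T) i j = (i == j)%:R) :
  forall X : 'M[R]_(n * d, n * d),
    opnorm (hadamard X (S *m S^T)) <= opnorm X.
Proof. by apply: opnorm_hadamard_gram_le => i; rewrite hS // eqxx. Qed.
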